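(* Let $s\in\mathcal{Q}=\mathbb{Q}^{\geq0}\cup\{\infty\}$, written $s=q/p$ with $p,q\in\mathbb{N}$ coprime ($\infty=1/0$). Then $P^s_{p-1}\in J_s$ and $Q^s_{q-1}\in J_s$, and $$J_s=\left\langle\{P^s_i\mid 0\leq i<p\}\cup\{Q^s_j\mid 0\leq j<q\}\right\rangle_s .$$
   Context: $J_s=\{(\alpha,\beta)\in\mathbb{Z}^2:\ \alpha\equiv q,\ \beta\equiv p \pmod 2;\ \alpha\geq-q;\ \beta\geq-p;\ \alpha+\beta\leq p+q-2;\ p\alpha+q\beta\geq0\}$. $Z_s=(q,p)+2\mathbb{Z}^2$. $P^s_i=(q+2i,-p)$ and $Q^s_j=(-q,p+2j)$ for $i,j\in\mathbb{Z}$. For $U\subset Z_s$, $\langle U\rangle_s$ denotes the intersection with $Z_s$ of the convex hull of $U$ in $\mathbb{R}^2$. *)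

From HB Require Import structures.
From mathcomp Require Import all_boot all_order all_algebra.
From mathcomp Require Import reals.
Set Implicit Arguments. Unset Strict Implicit. Unset Printing Implicit Defensive.
Import Order.TTheory GRing.Theory Num.Theory.
Local Open Scope ring_scope.

(* Lattice points of Z^2 are pairs of integers. s = q/p with p q : nat coprime
   (p = 0, q = 1 encodes s = oo; q = 0, p = 1 encodes s = 0). *)

Definition J_s (p q : nat) (x : int * int) : Prop :=
  let a := x.1 in let b := x.2 in
  [/\ (2 %| a - q%:Z)%Z /\ (2 %| b - p%:Z)%Z,
      - (q%:Z) <= a, - (p%:Z) <= b,
      a + b <= p%:Z + q%:Z - 2
    & 0 <= p%:Z * a + q%:Z * b].

Definition Z_s (p q : nat) (x : int * int) : Prop :=
  (2 %| x.1 - q%:Z)%Z /\ (2 %| x.2 - p%:Z)%Z.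

Definition P_s (p q : nat) (i : int) : int * int := (q%:Z + 2 * i, - (p%:Z)).
Definition Q_s (p q : nat) (j : int) : int * int := (- (q%:Z), p%:Z + 2 * j).

Definition in_conv_hull (R : realType) (U : seq (int * int)) (x : int * int) : Prop :=
  exists w : 'I_(size U) -> R,
    [/\ forall k, 0 <= w k,
        \sum_(k < size U) w k = 1,
        \sum_(k < size U) w k * ((nth (0,0) U k).1)%:~R = (x.1)%:~R
      & \sum_(k < size U) w k * ((nth (0,0) U k).2)%:~R = (x.2)%:~R].

Definition hull_s (R : realType) (p q : nat) (U : seq (int * int)) (x : int * int) : Prop :=
  Z_s p q x /\ in_conv_hull R U x.

Definition gens_s (p q : nat) : seq (int * int) :=
  [seq P_s p q i%:Z | i <- iota 0 p] ++ [seq Q_s p q j%:Z | j <- iota 0 q].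

From HB Require Import structures.
From mathcomp Require Import all_boot all_order all_algebra.
From mathcomp Require Import reals.
From mathcomp Require Import zify lra.
Import Order.TTheory GRing.Theory Num.Theory.
Local Open Scope ring_scope.

(* The four inequalities cutting J_s out of Z_s are linear and hold at every
   generator, so they hold on the convex hull of the generators.  Conversely, for
   p, q > 0 and in the shifted coordinates v = a + q, u = b + p, the real region
   they define is the triangle v, u >= 0, v + u <= 2(p + q - 1) minus the corner
   p v + q u < 2 p q: the quadrilateral with vertices P_0, P_(p-1), Q_0, Q_(q-1).
   Each of its points is th X + (1 - th) Y with X on the edge [P_0, P_(p-1)] and
   Y on the edge [Q_0, Q_(q-1)].  Coprimality only excludes p = q = 0 and, for
   s = 0 or s = oo, makes J_s a single generator. *)

Lemma in_conv_hull_halfplane {R : realType} (U : seq (int * int)) (al be c : int)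
    (x : int * int) :
  (forall y, y \in U -> c <= al * y.1 + be * y.2) ->
  in_conv_hull R U x -> c <= al * x.1 + be * x.2.
Proof.
move=> hU [w [w_ge0 w_sum1 wx wy]].
rewrite -(ler_int R) intrD !intrM -wx -wy !mulr_sumr -big_split /=.
have -> : c%:~R = \sum_(k < size U) w k * c%:~R by rewrite -mulr_suml w_sum1 mul1r.
apply: ler_sum => k _; rewrite mulrCA [_ * (w k * _)]mulrCA -mulrDr.
apply: ler_wpM2l => //; rewrite -!intrM -intrD ler_int.
exact/hU/mem_nth.
Qed.

Lemma in_conv_hull_subset {R : realType} {U V : seq (int * int)} {x : int * int} :
  {subset V <= U} -> in_conv_hull R V x -> in_conv_hull R U x.
Proof.
move=> sVU [w [w_ge0 w_sum1 wx wy]].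
have VU (k : 'I_(size V)) : (index (nth (0%R, 0%R) V k) U < size U)%N.
  by rewrite index_mem sVU ?mem_nth.
pose f k : 'I_(size U) := Ordinal (VU k).
have regroup (F : int * int -> R) : \sum_(k < size V) w k * F (nth (0, 0) V k) =
    \sum_(j < size U) (\sum_(k | f k == j) w k) * F (nth (0, 0) U j).
  rewrite (partition_big f xpredT) //=; apply: eq_bigr => j _.
  rewrite mulr_suml; apply: eq_bigr => k /eqP <-.
  by rewrite nth_index ?sVU ?mem_nth.
exists (fun j => \sum_(k | f k == j) w k); split.
- by move=> j; apply: sumr_ge0.
- rewrite -w_sum1 -(eq_bigr _ (fun k _ => mulr1 (w k))) (regroup (fun=> 1)).
  by apply: eq_bigr => j _; rewrite mulr1.
- by rewrite -wx (regroup (fun y => (y.1)%:~R)).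
- by rewrite -wy (regroup (fun y => (y.2)%:~R)).
Qed.

Lemma in_conv_hull_mem {R : realType} (U : seq (int * int)) (x : int * int) :
  x \in U -> in_conv_hull R U x.
Proof.
move=> xU; apply: (in_conv_hull_subset (V := [:: x])); first by move=> y /[!inE] /eqP->.
by exists (fun=> 1); rewrite !big_ord1 !mul1r.
Qed.

Lemma split_scaled_segment {R : realFieldType} {th lo hi t : R} :
  0 <= th -> th * lo <= t <= th * hi ->
  exists al be : R, [/\ 0 <= al, 0 <= be, al + be = th & t = al * lo + be * hi].
Proof.
move=> th_ge0 /andP[lo_t t_hi].
have [hi_le_lo | lo_lt_hi] := lerP hi lo.
  by exists th, 0; split; rewrite ?mul0r ?addr0 //; nra.
pose be := (t - th * lo) / (hi - lo).
have hi_lo_gt0 : 0 < hi - lo by lra.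
have be_ge0 : 0 <= be by rewrite divr_ge0 //; lra.
have be_le_th : be <= th by rewrite ler_pdivrMr //; lra.
have e_be : be * (hi - lo) = t - th * lo by rewrite divfK //; lra.
exists (th - be), be; split; [lra | done | lra | nra].
Qed.

Lemma quadrilateral_slice {R : realFieldType} (P Q v u : R) :
  1 <= P -> 1 <= Q -> 0 <= v -> 0 <= u ->
  v + u <= 2 * (P + Q - 1) -> 2 * P * Q <= P * v + Q * u ->
  exists th : R, [/\ 0 <= th, 0 <= 1 - th,
    th * (2 * Q) <= v <= th * (2 * (P + Q - 1))
  & (1 - th) * (2 * P) <= u <= (1 - th) * (2 * (P + Q - 1))].
Proof.
move=> P_ge1 Q_ge1 v_ge0 u_ge0 vu_le vu_ge.
set N := P + Q - 1.
have N_gt0 : 0 < N by rewrite /N; lra.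
pose l1 := v / (2 * N); pose l2 := u / (2 * P).
have e1 : l1 * (2 * N) = v by rewrite divfK //; lra.
have e2 : l2 * (2 * P) = u by rewrite divfK //; lra.
have eN : N = P + Q - 1 by [].
clearbody N l1 l2.
have [l1_le | l1_gt] := lerP l1 (1 - l2);
  [exists (1 - l2) | exists l1]; split; try (apply/andP; split); nra.
Qed.

Lemma gens_s_J_s (p q : nat) (y : int * int) : y \in gens_s p q -> J_s p q y.
Proof.
rewrite mem_cat => /orP[] /mapP[i]; rewrite mem_iota => i_lt ->;
  rewrite /J_s /=; split; lia.
Qed.

Lemma vertices_sub_gens_s {p q : nat} : (0 < p)%N -> (0 < q)%N ->
  {subset [:: P_s p q 0; P_s p q (p%:Z - 1); Q_s p q 0; Q_s p q (q%:Z - 1)]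
     <= gens_s p q}.
Proof.
move=> p_gt0 q_gt0 y; rewrite !inE mem_cat.
have P_in i : (i < p)%N -> P_s p q i%:Z \in [seq P_s p q i%:Z | i <- iota 0 p].
  by move=> i_lt; apply: map_f; rewrite mem_iota.
have Q_in j : (j < q)%N -> Q_s p q j%:Z \in [seq Q_s p q j%:Z | j <- iota 0 q].
  by move=> j_lt; apply: map_f; rewrite mem_iota.
have -> : p%:Z - 1 = p.-1 by lia.
have -> : q%:Z - 1 = q.-1 by lia.
by case/or4P=> /eqP->; rewrite ?P_in ?Q_in ?orbT //; lia.
Qed.

Lemma J_s_in_conv_hull_vertices {R : realType} {p q : nat} {x : int * int} :
  (0 < p)%N -> (0 < q)%N -> J_s p q x ->
  in_conv_hull R [:: P_s p q 0; P_s p q (p%:Z - 1); Q_s p q 0; Q_s p q (q%:Z - 1)] x.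
Proof.
case: x => a b p_gt0 q_gt0 [_ a_ge b_ge ab_le pq_ge0] /=.
move: a_ge b_ge ab_le pq_ge0; rewrite -!(ler_int R) !(intrD, intrB, intrM, intrN).
rewrite -!pmulrn; set P : R := p%:R; set Q : R := q%:R.
set A : R := a%:~R; set B : R := b%:~R => a_ge b_ge ab_le pq_ge0.
have P_ge1 : 1 <= P by rewrite ler1n.
have Q_ge1 : 1 <= Q by rewrite ler1n.
have [th [th_ge0 th_le1 v_bounds u_bounds]] :=
  @quadrilateral_slice R P Q (A + Q) (B + P) P_ge1 Q_ge1
    ltac:(lra) ltac:(lra) ltac:(lra) ltac:(nra).
have [wP0 [wP1 [wP0_ge0 wP1_ge0 sumP eP]]] :=
  split_scaled_segment th_ge0 v_bounds.
have [wQ0 [wQ1 [wQ0_ge0 wQ1_ge0 sumQ eQ]]] :=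
  split_scaled_segment th_le1 u_bounds.
exists (fun k : 'I_4 => nth 0 [:: wP0; wP1; wQ0; wQ1] k).
rewrite !big_ord_recl !big_ord0 /= !(intrD, intrB, intrM, intrN) -!pmulrn.
rewrite -/P -/Q -/A -/B.
split; first by case=> [[|[|[|[|]]]]].
- lra.
- nra.
- nra.
Qed.

Lemma hull_s_sub_J_s (R : realType) (p q : nat) (x : int * int) :
  hull_s R p q (gens_s p q) x -> J_s p q x.
Proof.
case=> Zx hx.
have halfplane (al be c : int) :
    (forall y, J_s p q y -> c <= al * y.1 + be * y.2) -> c <= al * x.1 + be * x.2.
  by move=> hJ; apply: in_conv_hull_halfplane hx => y /gens_s_J_s /hJ.
split=> //.
- suff : - q%:Z <= 1 * x.1 + 0 * x.2 by lia.
  by apply: halfplane => y [_]; lia.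
- suff : - p%:Z <= 0 * x.1 + 1 * x.2 by lia.
  by apply: halfplane => y [_]; lia.
- suff : 2 - p%:Z - q%:Z <= -1 * x.1 + -1 * x.2 by lia.
  by apply: halfplane => y [_]; lia.
- by apply: halfplane => y [_].
Qed.

Lemma J_s_sub_hull_s (R : realType) (p q : nat) (x : int * int) :
  coprime p q -> J_s p q x -> hull_s R p q (gens_s p q) x.
Proof.
move=> co_pq Jx; split; first by case: Jx.
have [p0 | p_gt0] := posnP p.
  move: co_pq Jx; rewrite p0 /coprime gcd0n => /eqP->.
  case: x => a b [_] /= ? ? ? ?; apply: in_conv_hull_mem.
  by have [-> ->] : a = -1 /\ b = 0 by lia.
have [q0 | q_gt0] := posnP q.
  move: co_pq Jx; rewrite q0 /coprime gcdn0 => /eqP->.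
  case: x => a b [_] /= ? ? ? ?; apply: in_conv_hull_mem.
  by have [-> ->] : a = 0 /\ b = -1 by lia.
exact: in_conv_hull_subset (vertices_sub_gens_s p_gt0 q_gt0)
  (J_s_in_conv_hull_vertices p_gt0 q_gt0 Jx).
Qed.

Theorem lemma4 (R : realType) (p q : nat) (hpq : coprime p q) :
  [/\ J_s p q (P_s p q (p%:Z - 1)),
      J_s p q (Q_s p q (q%:Z - 1))
    & forall x : int * int, J_s p q x <-> hull_s R p q (gens_s p q) x].
Proof.
have pq_gt0 : (0 < p + q)%N by case: p hpq => //; rewrite /coprime gcd0n => /eqP->.
split; [by rewrite /J_s /P_s /=; (repeat split); nia |
        by rewrite /J_s /Q_s /=; (repeat split); nia |].
by move=> x; split; [exact: J_s_sub_hull_s | exact: hull_s_sub_J_s].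
Qed.
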